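(* Let $m\ge2$ and $t\ge1$ be integers, and let $f$ be the two-digit base-$m$ Kaprekar map on $X=\{0,\dots,m^2-1\}$. There exists $x\in X$ with $K(x)\neq\{0\}$ and $T(x)=t$ if and only if there exists an integer $d>1$ with $d\mid m+1$ such that $t$ is the least positive integer satisfying $d\mid 2^t+1$ or $d\mid 2^t-1$.
   Context: For an integer $m\ge2$, $X=\{0,1,\dots,m^2-1\}$, each element written with exactly two base-$m$ digits (leading zeros allowed); $f(x)=D(x)-A(x)$ where $D(x)$ (resp. $A(x)$) has the digits of $x$ in nonincreasing (resp. nondecreasing) order. The step $S(x)$ is the least $s\ge0$ such that $f^{s+t}(x)=f^s(x)$ for some $t\ge1$; the minimal period $T(x)$ is the least $t\ge1$ with $f^{S(x)+t}(x)=f^{S(x)}(x)$; the fixed set of $x$ is $K(x)=\{f^{S(x)+i}(x):0\le i<T(x)\}$. *)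

From mathcomp Require Import all_boot.
From mathcomp Require Import boolp.
Set Implicit Arguments. Unset Strict Implicit. Unset Printing Implicit Defensive.

(* Two-digit base-m Kaprekar map: x = hi*m + lo with hi = x %/ m, lo = x %% m
   (for x < m^2 these are the two base-m digits, leading zero allowed).
   D(x) = digits in nonincreasing order, A(x) = digits in nondecreasing order. *)
Definition kdesc (m x : nat) : nat := maxn (x %/ m) (x %% m) * m + minn (x %/ m) (x %% m).
Definition kasc  (m x : nat) : nat := minn (x %/ m) (x %% m) * m + maxn (x %/ m) (x %% m).
Definition kap (m x : nat) : nat := kdesc m x - kasc m x.

Definition is_pre (m x s : nat) : bool :=
  `[< exists t, 0 < t /\ iter (s + t) (kap m) x = iter s (kap m) x >].

(* Step S(x): least s >= 0 with is_pre (0 if none exists; it always exists on X). *)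
Definition kstep (m x : nat) : nat :=
  match pselect (exists s, is_pre m x s) with
  | left h => ex_minn h
  | right _ => 0
  end.

Definition is_per (m x t : nat) : bool :=
  (0 < t) && (iter (kstep m x + t) (kap m) x == iter (kstep m x) (kap m) x).

Definition kperiod (m x : nat) : nat :=
  match pselect (exists t, is_per m x t) with
  | left h => ex_minn h
  | right _ => 0
  end.

(* Fixed set K(x) = { f^(S(x)+i)(x) : 0 <= i < T(x) }, as a list (compared as a set via =i). *)
Definition kfixed (m x : nat) : seq nat :=
  [seq iter (kstep m x + i) (kap m) x | i <- iota 0 (kperiod m x)].

From mathcomp Require Import all_boot ssralg zmodp zify boolp.
Import GRing.Theory.
Set Implicit Arguments. Unset Strict Implicit. Unset Printing Implicit Defensive.

(* Writing w = a*m + b, f(w) = |a - b| * (m - 1): after one step every orbit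
   lives on the multiples k*(m-1) with k < m, on which f acts as the folding
   map kapq k = |m + 1 - 2k| (with kapq 0 = 0).  Put n = m + 1.  Modulo n,
   kapq k = +-2k, hence kapq^s k = +-2^s k.  Since kapq k = kapq (n - k), a
   point y on a kapq-cycle satisfies kapq^s y = y as soon as kapq^s y = +-y
   (mod n), i.e. iff n divides (2^s - 1) y or (2^s + 1) y.  If the multiples
   of y vanishing mod n are exactly the multiples of d, this says that
   d | 2^s - 1 or d | 2^s + 1, so the period of y is the least such s.

   The theorem follows:
   a nonzero cycle point y yields d = n / gcd(y, n), and conversely a divisor
   d of n yields the cycle point kapq (n / d), whose annihilator mod n is d. *)

Definition is_min_period (T : Type) (f : T -> T) (z : T) (t : nat) : Prop :=
  [/\ 0 < t, iter t f z = z & forall s, 0 < s -> iter s f z = z -> t <= s].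

Lemma kap0 m j : iter j (kap m) 0 = 0.
Proof. by elim: j => //= j ->; rewrite /kap /kdesc /kasc div0n mod0n. Qed.

Lemma kperiod_min m x : 0 < kperiod m x ->
  is_min_period (kap m) (iter (kstep m x) (kap m) x) (kperiod m x).
Proof.
rewrite /kperiod; case: pselect => [ex _ | _] //.
case: ex_minnP => t /andP [t_gt0 /eqP per] least; split => //.
- by rewrite -iterD addnC.
- by move=> s s_gt0 per_s; apply: least; rewrite /is_per s_gt0 addnC iterD per_s /=.
Qed.

Lemma kstep_periodic m x t : 0 < t -> iter t (kap m) x = x -> kstep m x = 0.
Proof.
move=> t_gt0 per; have pre0 : is_pre m x 0 by apply/asboolP; exists t.
rewrite /kstep; case: pselect => [ex | []]; last by exists 0.
by case: ex_minnP => s _ /(_ 0 pre0); rewrite leqn0 => /eqP.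
Qed.

Lemma kperiod_of_min m x t : is_min_period (kap m) x t -> kperiod m x = t.
Proof.
case=> t_gt0 per least; have step0 := kstep_periodic t_gt0 per.
have per_t : is_per m x t by rewrite /is_per step0 t_gt0 per /=.
rewrite /kperiod; case: pselect => [ex | []]; last by exists t.
case: ex_minnP => p + /(_ t per_t) le_pt; rewrite /is_per step0 => /andP [p_gt0 /eqP per_p].
by apply/eqP; rewrite eqn_leq le_pt least.
Qed.

Lemma kfixed_zero m x : 0 < kperiod m x ->
  (kfixed m x =i [:: 0]) <-> iter (kstep m x) (kap m) x = 0.
Proof.
move=> T_gt0; have z_in : iter (kstep m x) (kap m) x \in kfixed m x.
  by apply/mapP; exists 0; rewrite ?addn0 // mem_iota add0n.
split=> [K0 | z0 a]; first by move: z_in; rewrite K0 inE => /eqP.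
rewrite inE; apply/mapP/eqP => [[i _ ->] | ->]; first by rewrite addnC iterD z0 kap0.
by move: z_in; rewrite z0 => /mapP.
Qed.

Section Reduction.
Variable m : nat.
Hypothesis m_ge2 : 2 <= m.

Definition kgap (w : nat) : nat := maxn (w %/ m) (w %% m) - minn (w %/ m) (w %% m).

(* The action of the Kaprekar map on multiples of m - 1, see kgap_mul. *)
Definition kapq (k : nat) : nat :=
  if k == 0 then 0 else if 2 * k <= m + 1 then m + 1 - 2 * k else 2 * k - (m + 1).

Lemma kapE w : kap m w = kgap w * (m - 1).
Proof. by rewrite /kap /kdesc /kasc /kgap; case: (leqP (w %/ m) (w %% m)); nia. Qed.

Lemma kgap_lt w : w < m ^ 2 -> kgap w < m.
Proof.
move=> w_lt; have hi : w %/ m < m by rewrite ltn_divLR ?mulnn; lia.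
have lo : w %% m < m by rewrite ltn_mod; lia.
rewrite /kgap; move: hi lo; generalize (w %/ m) (w %% m) => a b; lia.
Qed.

(* k*(m-1) has digits k - 1 and m - k, whose gap is kapq k. *)
Lemma kgap_mul k : k < m -> kgap (k * (m - 1)) = kapq k.
Proof.
move=> k_lt; rewrite /kapq; case: eqP => [-> | k_neq0]; first by rewrite /kgap div0n mod0n.
have -> : k * (m - 1) = (k - 1) * m + (m - k) by nia.
rewrite /kgap divnMDl ?modnMDl ?divn_small ?modn_small; try lia.
by rewrite addn0; case: ifP; lia.
Qed.

Lemma kapq_sym k : 0 < k < m + 1 -> kapq (m + 1 - k) = kapq k.
Proof.
move=> k_bd; have k_neq0 : (k == 0) = false by lia.
have k'_neq0 : (m + 1 - k == 0) = false by lia.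
by rewrite /kapq k_neq0 k'_neq0; case: ifP => le1; case: ifP => le2; lia.
Qed.

Lemma kapq_lt k : k < m -> kapq k < m.
Proof. by move=> k_lt; rewrite /kapq; case: eqP => k0; [lia | case: ifP; lia]. Qed.

Lemma iter_kapq_lt k j : k < m -> iter j kapq k < m.
Proof. by move=> k_lt; elim: j => //= j; apply: kapq_lt. Qed.

Lemma iter_kap_mul k j : k < m -> iter j (kap m) (k * (m - 1)) = iter j kapq k * (m - 1).
Proof.
move=> k_lt; elim: j => //= j ->.
by rewrite kapE kgap_mul // iter_kapq_lt.
Qed.

Lemma iter_kapS w j : w < m ^ 2 -> iter j.+1 (kap m) w = iter j kapq (kgap w) * (m - 1).
Proof. by move=> w_lt; rewrite iterSr kapE iter_kap_mul // kgap_lt. Qed.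

Lemma iter_kap_lt w j : w < m ^ 2 -> iter j (kap m) w < m ^ 2.
Proof.
case: j => // j w_lt; rewrite iter_kapS //.
have := iter_kapq_lt j (kgap_lt w_lt); nia.
Qed.

Lemma kap_cycle_mul z t : z < m ^ 2 -> 0 < t -> iter t (kap m) z = z ->
  exists2 y, y < m & z = y * (m - 1).
Proof.
move=> z_lt t_gt0 per; exists (iter t.-1 kapq (kgap z)); first exact/iter_kapq_lt/kgap_lt.
by rewrite -iter_kapS // prednK.
Qed.

Lemma min_period_mul y t : y < m ->
  is_min_period (kap m) (y * (m - 1)) t <-> is_min_period kapq y t.
Proof.
move=> y_lt.
have scale s : iter s (kap m) (y * (m - 1)) = y * (m - 1) <-> iter s kapq y = y.
  rewrite iter_kap_mul //; split=> [eq_mul | -> //].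
  by apply/eqP; rewrite -(@eqn_pmul2r (m - 1)) ?eq_mul //; lia.
by split=> -[t_gt0 /scale per least]; split=> // s s_gt0 /scale; apply: least.
Qed.
End Reduction.

Definition pm_pow2 (d s : nat) : bool := (d %| 2 ^ s + 1) || (d %| 2 ^ s - 1).

(* Such a d divides an odd number, hence is odd. *)
Lemma pm_pow2_odd d s : 0 < s -> pm_pow2 d s -> odd d.
Proof.
move=> s_gt0; have even_pow : odd (2 ^ s) = false by rewrite oddX /=; case: s s_gt0.
by case/orP=> /dvdn_odd; apply; rewrite ?oddD ?oddB ?expn_gt0 ?even_pow.
Qed.

Lemma dvdn_quot_mul n d c : 0 < n -> d %| n -> (n %| c * (n %/ d)) = (d %| c).
Proof.
move=> n_gt0 d_dvd; have d_gt0 := dvdn_gt0 n_gt0 d_dvd.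
have q_gt0 : 0 < n %/ d by rewrite divn_gt0 // dvdn_leq.
by rewrite -{1}(divnK d_dvd) mulnC dvdn_pmul2r.
Qed.

Section SignedEquality.
Local Open Scope ring_scope.
Variable R : comRingType.

(* u = +-v; in 'Z_n this is the congruence mod n up to sign. *)
Definition signed_eq (u v : R) : Prop := exists e : nat, u = (-1) ^+ e * v.

Lemma signed_eq_sym u v : signed_eq u v -> signed_eq v u.
Proof. by case=> e ->; exists e; rewrite signrMK. Qed.

Lemma signed_eq_trans u v w : signed_eq u v -> signed_eq v w -> signed_eq u w.
Proof. by case=> e1 -> [e2 ->]; exists (e1 + e2)%N; rewrite exprD mulrA. Qed.

Lemma signed_eqMl c u v : signed_eq u v -> signed_eq (c * u) (c * v).
Proof. by case=> e ->; exists e; rewrite mulrCA. Qed.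

Lemma signed_eq_eq0 u v : signed_eq u v -> (u == 0) = (v == 0).
Proof.
case=> e ->; apply/eqP/eqP => [| ->]; last by rewrite mulr0.
by move/(congr1 ( *%R ((-1) ^+ e))); rewrite signrMK mulr0.
Qed.
End SignedEquality.

Section Residues.
Local Open Scope ring_scope.
Variable m : nat.
Hypothesis m_ge2 : (2 <= m)%N.
Local Notation n := (m + 1)%N.
Local Notation kapq := (kapq m).

Lemma natZp_eq0 x : ((x%:R : 'Z_n) == 0) = (n %| x)%N.
Proof. by rewrite -val_eqE /= val_Zp_nat //; lia. Qed.

Lemma signed_natP a b : (a <= b)%N ->
  signed_eq (a%:R : 'Z_n) b%:R <-> (n %| b - a)%N \/ (n %| b + a)%N.
Proof.
move=> le_ab; rewrite -!natZp_eq0 natrB // natrD; split.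
- case=> e; rewrite -signr_odd; case: (odd e) => ->; rewrite ?expr1 ?expr0 ?mulN1r ?mul1r.
    by right; rewrite subrr.
  by left; rewrite subrr.
- case=> zero; [exists 0%N | exists 1%N]; apply/eqP.
    by rewrite expr0 mul1r eq_sym -subr_eq0.
  by rewrite expr1 mulN1r -addr_eq0 addrC.
Qed.

Lemma signed_nat_small u v : (u < n)%N -> (v < n)%N ->
  signed_eq (u%:R : 'Z_n) v%:R -> u = v \/ (u + v = n)%N.
Proof.
wlog le_uv : u v / (u <= v)%N => [sym | u_lt v_lt /signed_natP [] // dvd].
  case: (leqP u v) => [/sym // | /ltnW le_vu u_lt v_lt /signed_eq_sym].
  by case/(sym v u le_vu v_lt u_lt); lia.
- case/dvdnP: dvd => q diff; have : (q < 1)%N by nia.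
  by case: q diff => //; lia.
- case/dvdnP: dvd => q sum; have : (q < 2)%N by nia.
  by case: q sum => [|[|]] //; lia.
Qed.

Lemma kapq_signed k : signed_eq ((kapq k)%:R : 'Z_n) (2 * k)%:R.
Proof.
rewrite /kapq; case: eqP => [-> | _]; first by exists 0%N; rewrite muln0 mulr0.
have n0 : (n%:R : 'Z_n) = 0 by apply: pchar_Zp; lia.
case: ifP => le2k; [exists 1%N | exists 0%N]; rewrite natrB ?n0; try lia.
- by rewrite sub0r expr1 mulN1r.
- by rewrite subr0 expr0 mul1r.
Qed.

Lemma iter_kapq_signed k j : signed_eq ((iter j kapq k)%:R : 'Z_n) (2 ^ j * k)%:R.
Proof.
elim: j => [|j IH]; first by exists 0%N; rewrite expr0 mul1r mul1n.
apply: signed_eq_trans (kapq_signed _) _.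
by rewrite expnS -mulnA (natrM _ 2 (iter _ _ _)) (natrM _ 2 (_ * k)); apply: signed_eqMl.
Qed.

Lemma kapq_signed_eq u v : (u < n)%N -> (v < n)%N ->
  signed_eq (u%:R : 'Z_n) v%:R -> kapq u = kapq v.
Proof.
move=> u_lt v_lt /(signed_nat_small u_lt v_lt) [-> | sum]; first by [].
have -> : u = (n - v)%N by lia.
by rewrite kapq_sym //; lia.
Qed.

Lemma signed_mul_dvd c u : (0 < c)%N ->
  signed_eq (u%:R : 'Z_n) (c * u)%:R <-> (n %| (c - 1) * u)%N \/ (n %| (c + 1) * u)%N.
Proof.
by move=> c_gt0; rewrite signed_natP ?leq_pmull // mulnBl mulnDl mul1n.
Qed.

(* A periodic point y of kapq returns after s steps iff y = +-2^s y mod n: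
   if kapq^s y = n - y, then kapq^(s+1) y = kapq y and going round the
   cycle gives kapq^s y = y. *)
Lemma kapq_fix_iff y p s : (y < m)%N -> (0 < p)%N -> iter p kapq y = y ->
  iter s kapq y = y <-> signed_eq (y%:R : 'Z_n) (2 ^ s * y)%:R.
Proof.
move=> y_lt p_gt0 per; have orbit := iter_kapq_signed y s.
split=> [fix_s | signed_s]; first by rewrite fix_s in orbit.
have step : kapq (iter s kapq y) = kapq y.
  apply: kapq_signed_eq (ltn_addr 1 (iter_kapq_lt m_ge2 s y_lt)) (ltn_addr 1 y_lt) _.
  exact: signed_eq_trans orbit (signed_eq_sym signed_s).
rewrite -{1}per -iterD (_ : (s + p = p.-1 + s.+1)%N); last by lia.
by rewrite iterD iterS step -iterSr prednK.
Qed.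

Lemma kapq_image_fix k s : (k < m)%N ->
  (n %| (2 ^ s - 1) * k)%N \/ (n %| (2 ^ s + 1) * k)%N -> iter s kapq (kapq k) = kapq k.
Proof.
move=> k_lt /signed_mul_dvd; rewrite expn_gt0 => /(_ isT) signed_s.
rewrite -iterSr iterS.
apply: kapq_signed_eq (ltn_addr 1 (iter_kapq_lt m_ge2 s k_lt)) (ltn_addr 1 k_lt) _.
exact: signed_eq_trans (iter_kapq_signed k s) (signed_eq_sym signed_s).
Qed.

(* For an odd divisor d of n, the multiples of kapq (n / d) = +-2n/d that
   vanish mod n are the multiples of d. *)
Lemma kapq_quot_dvd d a : (d %| n)%N -> odd d ->
  (n %| a * kapq (n %/ d))%N = (d %| a)%N.
Proof.
move=> d_dvd d_odd; have n_gt0 : (0 < n)%N by rewrite addn1.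
have signed_a := signed_eqMl (a%:R : 'Z_n) (kapq_signed (n %/ d)).
rewrite -!natrM in signed_a.
rewrite -natZp_eq0 (signed_eq_eq0 signed_a) natZp_eq0 mulnA (dvdn_quot_mul _ n_gt0 d_dvd).
by rewrite Gauss_dvdl // coprimen2.
Qed.
End Residues.

Definition least_pm_pow2 (d t : nat) : Prop :=
  [/\ 0 < t, pm_pow2 d t & forall t', 0 < t' -> t' < t -> ~~ pm_pow2 d t'].

Lemma dvdn_mul_gcd n y a : 0 < n -> (n %| a * y) = (n %/ gcdn y n %| a).
Proof.
move=> n_gt0; have g_gt0 : 0 < gcdn y n by rewrite gcdn_gt0 n_gt0 orbT.
apply/idP/idP => [dvd | dvd].
- rewrite -(dvdn_pmul2r g_gt0) divnK ?dvdn_gcdr //.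
  by rewrite muln_gcdr dvdn_gcd dvd dvdn_mull.
- rewrite -(divnK (dvdn_gcdl y n)) mulnA -[X in X %| _](divnK (dvdn_gcdr y n)).
  by apply: dvdn_mul => //; apply: dvdn_mulr.
Qed.

Lemma gcd_quot_gt1 n y : 0 < y < n -> 1 < n %/ gcdn y n.
Proof.
case/andP=> y_gt0 y_lt; have n_gt0 : 0 < n by apply: leq_trans y_lt.
have q_gt0 : 0 < n %/ gcdn y n := dvdn_gt0 n_gt0 (dvdn_div (dvdn_gcdr y n)).
rewrite ltn_neqAle eq_sym q_gt0 andbT; apply/eqP => q1.
have := dvdn_mul_gcd y 1 n_gt0; rewrite q1 mul1n dvdnn => /(dvdn_leq y_gt0).
by rewrite leqNgt y_lt.
Qed.

Section Periods.
Variable m : nat.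
Hypothesis m_ge2 : 2 <= m.
Local Notation n := (m + 1).
Local Notation kapq := (kapq m).

Lemma kapq_fix_dvd y d p s : y < m -> 0 < p -> iter p kapq y = y ->
  (forall a, (n %| a * y) = (d %| a)) -> iter s kapq y = y <-> pm_pow2 d s.
Proof.
move=> y_lt p_gt0 per dvd_y.
rewrite (kapq_fix_iff m_ge2 _ y_lt p_gt0 per) signed_mul_dvd ?expn_gt0 // !dvd_y.
by rewrite /pm_pow2 orbC; apply: rwP orP.
Qed.

Lemma min_period_kapq_iff y d t : y < m -> (exists2 p, 0 < p & iter p kapq y = y) ->
  (forall a, (n %| a * y) = (d %| a)) -> is_min_period kapq y t <-> least_pm_pow2 d t.
Proof.
move=> y_lt [p p_gt0 per] dvd_y; have fixE s := kapq_fix_dvd s y_lt p_gt0 per dvd_y.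
split=> [[t_gt0 /fixE pm_t least] | [t_gt0 /fixE per_t least]]; split=> //.
- by move=> t' t'_gt0 lt_t't; apply/negP => /fixE /(least _ t'_gt0); rewrite leqNgt lt_t't.
- move=> s s_gt0 /fixE pm_s; rewrite leqNgt; apply/negP => lt_st.
  by have := least s s_gt0 lt_st; rewrite pm_s.
Qed.

Lemma period_divisor x t : x < m ^ 2 -> ~ (kfixed m x =i [:: 0]) -> kperiod m x = t ->
  0 < t -> exists d, [/\ 1 < d, d %| n & least_pm_pow2 d t].
Proof.
move=> x_lt K_neq0 T_eq t_gt0; have T_gt0 : 0 < kperiod m x by rewrite T_eq.
set z := iter (kstep m x) (kap m) x.
have z_lt : z < m ^ 2 := iter_kap_lt m_ge2 _ x_lt.
have z_neq0 : z <> 0 := contra_not (proj2 (kfixed_zero T_gt0)) K_neq0.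
have min_z : is_min_period (kap m) z t by rewrite -T_eq; apply: kperiod_min.
clearbody z; have [_ per_z _] := min_z.
have [y y_lt z_eq] := kap_cycle_mul m_ge2 z_lt t_gt0 per_z.
rewrite z_eq (min_period_mul m_ge2 _ y_lt) in min_z.
have y_gt0 : 0 < y by rewrite lt0n; apply/eqP => y0; apply: z_neq0; rewrite z_eq y0.
have n_gt0 : 0 < n by rewrite addn1.
exists (n %/ gcdn y n); split; first by apply: gcd_quot_gt1; rewrite y_gt0 ltn_addr.
  exact: dvdn_div (dvdn_gcdr y n).
rewrite -(min_period_kapq_iff _ y_lt _ (fun a => dvdn_mul_gcd y a n_gt0)) //.
by exists t; case: min_z.
Qed.

(* Sufficiency: a divisor d of n gives the cycle through kapq (n / d). *)
Lemma divisor_period d t : 1 < d -> d %| n -> least_pm_pow2 d t ->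
  exists x, x < m ^ 2 /\ ~ (kfixed m x =i [:: 0]) /\ kperiod m x = t.
Proof.
move=> d_gt1 d_dvd least; have [t_gt0 pm_t _] := least.
have d_odd := pm_pow2_odd t_gt0 pm_t.
have n_gt0 : 0 < n by rewrite addn1.
set k := n %/ d; have k_lt : k < m.
  have d_gt2 : 2 < d by rewrite ltn_neqAle d_gt1 andbT; apply: contraTneq d_odd => <-.
  by have : k * d = n := divnK d_dvd; nia.
set y := kapq k; have y_lt : y < m := kapq_lt m_ge2 k_lt.
have dvd_y : forall a, (n %| a * y) = (d %| a) :=
  fun a => kapq_quot_dvd m_ge2 a d_dvd d_odd.
have per_y : iter t kapq y = y.
  apply: kapq_image_fix => //; rewrite !dvdn_quot_mul //.
  by case/orP: pm_t; [right | left].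
have y_gt0 : 0 < y.
  rewrite lt0n; apply: contraTneq d_gt1 => y0.
  by have := dvd_y 1; rewrite y0 dvdn0 dvdn1 => /esym/eqP ->.
have min_x : is_min_period (kap m) (y * (m - 1)) t.
  rewrite (min_period_mul m_ge2 _ y_lt) (min_period_kapq_iff _ y_lt _ dvd_y) //.
  by exists t.
have [_ per_x _] := min_x; have step0 := kstep_periodic t_gt0 per_x.
have T_eq := kperiod_of_min min_x.
exists (y * (m - 1)); split; first by rewrite expnS expn1; apply: ltn_mul => //; lia.
split=> //; rewrite kfixed_zero ?T_eq // step0 /=.
by apply/eqP; rewrite muln_eq0 negb_or -!lt0n y_gt0; lia.
Qed.
End Periods.

Theorem theorem3p3p3 (m t : nat) (hm : 2 <= m) (ht : 1 <= t) :
  (exists x, x < m ^ 2 /\ ~ (kfixed m x =i [:: 0]) /\ kperiod m x = t) <->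
  (exists d, [/\ 1 < d, d %| m + 1,
     (d %| 2 ^ t + 1) || (d %| 2 ^ t - 1) &
     forall t', 0 < t' -> t' < t -> ~~ ((d %| 2 ^ t' + 1) || (d %| 2 ^ t' - 1))]).
Proof.
split=> [[x [x_lt [K_neq0 T_eq]]] | [d [d_gt1 d_dvd pm_t least]]].
- have [d [d_gt1 d_dvd [_ pm_t least]]] := period_divisor hm x_lt K_neq0 T_eq ht.
  by exists d.
- by apply: (divisor_period hm d_gt1 d_dvd); split.
Qed.
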